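(* Let $v\ge 2$ and $k\ge 2$ be integers with $k$ even. Then there exists an AOA$(1,k-1,k,v)$.
   Context: An orthogonal array OA$(t,k,v)$ (with $1\le t\le k$) is a $v^t\times k$ array with entries from a set $X$ of size $v$ such that, for every choice of $t$ of its columns, each $t$-tuple in $X^t$ appears exactly once as a row of the corresponding $v^t\times t$ subarray. For integers $1\le s\le t\le k$, an augmented orthogonal array AOA$(s,t,k,v)$ is a $v^t\times(k+1)$ array $A$ such that: (1) the first $k$ columns of $A$ form an OA$(t,k,v)$ on a symbol set $X$ of size $v$; (2) the last column of $A$ has entries from a set $Y$ of size $v^{t-s}$; (3) for any choice of $s$ of the first $k$ columns, these $s$ columns together with the last column contain every $(s+1)$-tuple of $X^s\times Y$ exactly once as a row. *)

From mathcomp Require Import all_boot all_order.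
Set Implicit Arguments. Unset Strict Implicit. Unset Printing Implicit Defensive.

(* An array with N rows and k columns over symbol set X is a function
   A : 'I_N -> 'I_k -> X (A r j = entry in row r, column j).
   A "choice of t of the columns" is an injective map c : 'I_t -> 'I_k. *)

Definition is_OA (X : finType) (t k v : nat) (A : 'I_(v ^ t) -> 'I_k -> X) :=
  [/\ 1 <= t, t <= k, #|X| = v &
    forall c : 'I_t -> 'I_k, injective c ->
    forall x : 'I_t -> X,
      #|[set r : 'I_(v ^ t) | [forall i : 'I_t, A r (c i) == x i]]| = 1].

(* AOA(s,t,k,v): a v^t x (k+1) array, given as its first k columns A and
   its last column L, with entries of the last column from Y, #|Y| = v^(t-s). *)
Definition is_AOA (X Y : finType) (s t k v : nat)
    (A : 'I_(v ^ t) -> 'I_k -> X) (L : 'I_(v ^ t) -> Y) :=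
  [/\ 1 <= s, s <= t, @is_OA X t k v A, #|Y| = v ^ (t - s) &
    forall c : 'I_s -> 'I_k, injective c ->
    forall (x : 'I_s -> X) (y : Y),
      #|[set r : 'I_(v ^ t) | [forall i : 'I_s, A r (c i) == x i] && (L r == y)]| = 1].

Definition AOA_exists (s t k v : nat) :=
  exists (X Y : finType) (A : 'I_(v ^ t) -> 'I_k -> X) (L : 'I_(v ^ t) -> Y),
    @is_AOA X Y s t k v A L.

From mathcomp Require Import all_boot all_order all_algebra.
Import GRing.Theory.

(* For k = n + 2 columns over a finite abelian group V, index the rows by
   x in V^(n+1) and take as columns x_0, ..., x_n and -(x_0 + ... + x_n), so
   that the k entries of each row sum to zero; the extra column is the vector
   (x_i + x_(i+1))_(i < n) in V^n.  By linearity, both counting conditions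
   reduce to injectivity, i.e. to a trivial kernel.  Any k - 1 vanishing
   columns force the missing one to vanish, since the columns sum to zero.
   If the extra column vanishes then x_i = (-1)^i x_0, so every column is
   +-x_0; the last one is -x_0 precisely because n + 1 = k - 1 is odd. *)

Lemma card_preim_inj (T T' : finType) (F : T -> T') (z : T') :
  injective F -> #|T'| <= #|T| -> #|[set r | F r == z]| = 1.
Proof.
move=> F_inj leT'T.
have /codomP [r0 ->] : z \in codom F by apply: inj_card_onto.
suff -> : [set r | F r == F r0] = [set r0] by rewrite cards1.
by apply/setP => r; rewrite !inE (inj_eq F_inj).
Qed.

Lemma AOA_exists_of_inj (X Y R : finType) (s t k v : nat)
    (A : R -> 'I_k -> X) (L : R -> Y) :
  #|R| = v ^ t -> 1 <= s -> s <= t -> t <= k ->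
  #|X| = v -> #|Y| = v ^ (t - s) ->
  (forall c : 'I_t -> 'I_k, injective c -> forall r1 r2,
     (forall i, A r1 (c i) = A r2 (c i)) -> r1 = r2) ->
  (forall c : 'I_s -> 'I_k, injective c -> forall r1 r2,
     (forall i, A r1 (c i) = A r2 (c i)) -> L r1 = L r2 -> r1 = r2) ->
  AOA_exists s t k v.
Proof.
move=> cardR s_gt0 le_st le_tk cardX cardY injOA injAOA.
pose g (r : 'I_(v ^ t)) : R := enum_val (cast_ord (esym cardR) r).
have g_inj : injective g by move=> r1 r2 /enum_val_inj /cast_ord_inj.
have restrictE m (c : 'I_m -> 'I_k) r (x : 'I_m -> X) :
    [forall i, A (g r) (c i) == x i] = ([ffun i => A (g r) (c i)] == finfun x).
  apply/eqfunP/eqP => [eq_x | /ffunP eq_x i].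
    by apply/ffunP => i; rewrite !ffunE.
  by have := eq_x i; rewrite !ffunE.
exists X, Y, (fun r j => A (g r) j), (fun r => L (g r)); split=> //.
  split=> // [|c c_inj x]; first exact: leq_trans le_st.
  under eq_finset do rewrite restrictE.
  apply: card_preim_inj; last by rewrite card_ffun !card_ord cardX.
  move=> r1 r2 /ffunP eq_r; apply/g_inj/(injOA c c_inj) => i.
  by have := eq_r i; rewrite !ffunE.
move=> c c_inj x y.
under eq_finset do rewrite restrictE -xpair_eqE.
apply: card_preim_inj; last first.
  by rewrite card_prod card_ffun !card_ord cardX cardY -expnD subnKC.
move=> r1 r2 [/ffunP eq_r eq_L]; apply/g_inj/(injAOA c c_inj) => // i.
by have := eq_r i; rewrite !ffunE.
Qed.

Lemma inj_codom_miss {aT T : finType} {f : aT -> T} {j0 j : T} :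
  injective f -> #|T| = #|aT|.+1 -> j0 \notin codom f -> j != j0 ->
  j \in codom f.
Proof.
move=> f_inj cardT j0_out j_neq.
have sub : codom f \subset predC1 j0.
  by apply/subsetP => j' j'_in; rewrite !inE; apply: contraNneq j0_out => <-.
have card_eq : #|codom f| = #|predC1 j0|.
  by rewrite card_codom // cardC1 cardT.
by rewrite ((subset_cardP card_eq) sub) !inE.
Qed.

Local Open Scope ring_scope.

Lemma sumr_alternating (V : zmodType) (a : V) (m : nat) :
  \sum_(i < m) (if odd i then - a else a) = a *+ odd m.
Proof.
elim: m => [|m IHm]; first by rewrite big_ord0.
rewrite big_ord_recr /= IHm; case: (odd m) => /=; first by rewrite subrr.
by rewrite add0r.
Qed.

Section ZeroSumArray.

Context {V : zmodType} {n : nat}.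
Implicit Types (x d : {ffun 'I_n.+1 -> V}).

Definition zero_sum_col x (j : 'I_n.+2) : V :=
  if unlift ord_max j is Some i then x i else - \sum_i x i.

Definition adj_sum x : {ffun 'I_n -> V} :=
  [ffun i => x (widen_ord (leqnSn n) i) + x (lift ord0 i)].

Lemma zero_sum_colB x1 x2 j :
  zero_sum_col (x1 - x2) j = zero_sum_col x1 j - zero_sum_col x2 j.
Proof.
rewrite /zero_sum_col; case: unlift => [i|]; first by rewrite !ffunE.
rewrite -opprD -sumrB; congr (- _).
by apply: eq_bigr => i _; rewrite !ffunE.
Qed.

Lemma adj_sumB x1 x2 : adj_sum (x1 - x2) = adj_sum x1 - adj_sum x2.
Proof. by apply/ffunP => i; rewrite !ffunE addrACA opprD. Qed.

Lemma zero_sum_col_lift x i : zero_sum_col x (lift ord_max i) = x i.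
Proof. by rewrite /zero_sum_col liftK. Qed.

Lemma zero_sum_col_max x : zero_sum_col x ord_max = - \sum_i x i.
Proof. by rewrite /zero_sum_col unlift_none. Qed.

Lemma sum_zero_sum_col x : \sum_j zero_sum_col x j = 0.
Proof.
rewrite big_ord_recr zero_sum_col_max /=.
have widen_lift (i : 'I_n.+1) : widen_ord (leqnSn _) i = lift ord_max i.
  by apply: val_inj; rewrite /= /bump leqNgt ltn_ord.
by under eq_bigr do rewrite widen_lift zero_sum_col_lift; rewrite subrr.
Qed.

Lemma zero_sum_col_eq0 (c : 'I_n.+1 -> 'I_n.+2) d :
  injective c -> (forall i, zero_sum_col d (c i) = 0) -> d = 0.
Proof.
move=> c_inj d_c.
have card_cols : #|'I_n.+2| = #|'I_n.+1|.+1 by rewrite !card_ord.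
have all_cols j : zero_sum_col d j = 0.
  have [/codomP [i ->] // | j_out] := boolP (j \in codom c).
  have others j' : j' != j -> zero_sum_col d j' = 0.
    by move=> /(inj_codom_miss c_inj card_cols j_out) /codomP [i ->].
  by have := sum_zero_sum_col d; rewrite (bigD1 j) //= big1 ?addr0.
by apply/ffunP => i; rewrite ffunE -zero_sum_col_lift all_cols.
Qed.

Lemma adj_sum_eq0_alternating d :
  adj_sum d = 0 -> forall i, d i = if odd i then - d ord0 else d ord0.
Proof.
move=> /ffunP d_adj [m lt_mn]; elim: m lt_mn => [|m IHm] lt_mn.
  by congr (d _); apply: val_inj.
have := d_adj (Ordinal (lt_mn : m < n)%N); rewrite !ffunE => /eqP.
rewrite addrC addr_eq0 => /eqP d_next.
have -> : Ordinal lt_mn = lift ord0 (Ordinal (lt_mn : m < n)%N) by apply: val_inj.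
rewrite d_next (_ : widen_ord _ _ = Ordinal (ltnW lt_mn)); last exact: val_inj.
by rewrite IHm /=; case: (odd m); rewrite ?opprK.
Qed.

Lemma adj_sum_col_eq0 (j : 'I_n.+2) d :
  ~~ odd n -> zero_sum_col d j = 0 -> adj_sum d = 0 -> d = 0.
Proof.
move=> n_even d_j /adj_sum_eq0_alternating d_alt.
suff d0 : d ord0 = 0.
  by apply/ffunP => i; rewrite ffunE d_alt d0 oppr0 if_same.
move: d_j; have [i ->|->] := unliftP ord_max j.
  by rewrite zero_sum_col_lift d_alt; case: ifP => // _ /eqP; rewrite oppr_eq0 => /eqP.
rewrite zero_sum_col_max (eq_bigr _ (fun i _ => d_alt i)) sumr_alternating /=.
by rewrite (negbTE n_even) /= => /eqP; rewrite oppr_eq0 => /eqP.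
Qed.

End ZeroSumArray.

Local Close Scope ring_scope.

Theorem theorem2p4 (v k : nat) :
  2 <= v -> 2 <= k -> ~~ odd k -> AOA_exists 1 (k - 1) k v.
Proof.
move=> v_ge2; case: k => [|[|n]] // _; rewrite /= negbK subn1 /= => n_even.
have cardZ : #|'Z_v| = v by rewrite card_ord Zp_cast.
apply: (@AOA_exists_of_inj _ _ _ 1 n.+1 n.+2 v
          (@zero_sum_col 'Z_v n) (@adj_sum 'Z_v n)) => //.
- by rewrite card_ffun cardZ card_ord.
- by rewrite card_ffun cardZ card_ord subn1.
- move=> c c_inj r1 r2 eq_cols; apply/subr0_eq/(zero_sum_col_eq0 c) => // i.
  by rewrite zero_sum_colB eq_cols subrr.
- move=> c c_inj r1 r2 eq_cols eq_adj; apply/subr0_eq.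
  apply: (adj_sum_col_eq0 (c ord0) _ n_even).
    by rewrite zero_sum_colB eq_cols subrr.
  by rewrite adj_sumB eq_adj subrr.
Qed.
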